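(* Every conserved interval $I$ of $\mathcal{P}$ admits a unique inclusion-maximal set of frontiers, denoted $F_I$. Moreover, every conserved interval $I$ of $\mathcal{P}$ with $|I|\geq 2$ satisfies one of the following: (1) $I$ is strong; (2) $I$ is weak and there exist a unique strong conserved interval $J$ of $\mathcal{P}$ and two elements $f_i,f_j\in F_J$ with $f_i<f_j$ such that $I=(f_i..f_j)$; moreover, in this case $F_I=F_J\cap I$ and $J=\mathrm{Container}(I)$.
   Context: Let $n\geq 2$ and let $\mathcal{P}=\{P_1,\ldots,P_K\}$ be signed permutations of $\{1,\ldots,n\}$: each $P_k$ is an ordering of $1,\ldots,n$ in which each element carries a sign $+$ or $-$. Assume $P_1=(+1,+2,\ldots,+n)$ and that every $P_k$ has first element $+1$ and last element $+n$. For integers $i\leq j$ write $(i..j)=\{i,\ldots,j\}$. A conserved interval of $\mathcal{P}$ is either a singleton, or a set $(a..c)$ with $a<c$ which (ignoring signs) occupies consecutive positions in every $P_k$ and which, in every $P_k$, has either $+a$ at its left end and $+c$ at its right end, or $-c$ at its left end and $-a$ at its right end. Two intervals $(i..j)$ and $(k..l)$ overlap if $i<k\leq j<l$ or $k<i\leq l<j$. A conserved interval is strong if it has at least two elements and overlaps no other conserved interval; otherwise it is weak. For a conserved interval $I=(a..c)$, a set $\{f_1,\ldots,f_k\}$ with $a=f_1<\cdots<f_k=c$ is a set of frontiers of $I$ if $(f_i..f_j)$ is a conserved interval for all $1\leq i<j\leq k$. For a conserved interval $I$, $\mathrm{Container}(I)$ is the smallest strong conserved interval containing $I$ (it exists since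 $(1..n)$ is strong). *)

From mathcomp Require Import all_boot.
From mathcomp Require Import finmap.

Set Implicit Arguments.
Unset Strict Implicit.
Unset Printing Implicit Defensive.

Local Open Scope fset_scope.

(* A signed element: (sign, value), sign = true means '+'. *)
Definition selt := (bool * nat)%type.
Definition sperm := seq selt.
(* An interval (i..j) is represented by the pair (i, j), with i <= j. *)
Definition interval := (nat * nat)%type.

Definition is_sperm (n : nat) (P : sperm) : Prop :=
  perm_eq (map snd P) (iota 1 n).

Definition id_sperm (n : nat) : sperm := [seq (true, i) | i <- iota 1 n].

Definition valid_family (n : nat) (Ps : seq sperm) : Prop :=
  [/\ 2 <= n, Ps <> [::], head [::] Ps = id_sperm n &
      forall P, P \in Ps ->
        [/\ is_sperm n P, head (false, 0) P = (true, 1) & last (false, 0) P = (true, n)]].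

(* Element of P at position q (0-based). *)
Definition at_pos (P : sperm) (q : nat) : selt := nth (false, 0) P q.

Definition conserved_in (P : sperm) (a c : nat) : Prop :=
  exists p, p + (c - a) < size P /\
    perm_eq (map snd (take (c - a).+1 (drop p P))) (iota a (c - a).+1) /\
    ((at_pos P p = (true, a) /\ at_pos P (p + (c - a)) = (true, c)) \/
     (at_pos P p = (false, c) /\ at_pos P (p + (c - a)) = (false, a))).

Definition conserved (n : nat) (Ps : seq sperm) (I : interval) : Prop :=
  [/\ 1 <= I.1, I.1 <= I.2, I.2 <= n &
      I.1 = I.2 \/ (I.1 < I.2 /\ forall P, P \in Ps -> conserved_in P I.1 I.2)].

Definition overlap (I J : interval) : Prop :=
  (I.1 < J.1 <= I.2 /\ I.2 < J.2) \/ (J.1 < I.1 <= J.2 /\ J.2 < I.2).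

Definition subint (I J : interval) : Prop := J.1 <= I.1 /\ I.2 <= J.2.

Definition strong (n : nat) (Ps : seq sperm) (I : interval) : Prop :=
  [/\ conserved n Ps I, I.1 < I.2 &
      forall J, conserved n Ps J -> ~ overlap I J].

Definition weak (n : nat) (Ps : seq sperm) (I : interval) : Prop :=
  conserved n Ps I /\ ~ strong n Ps I.

Definition frontiers (n : nat) (Ps : seq sperm) (I : interval) (F : {fset nat}) : Prop :=
  [/\ I.1 \in F, I.2 \in F, (forall f, f \in F -> I.1 <= f <= I.2) &
      forall f g, f \in F -> g \in F -> f < g -> conserved n Ps (f, g)].

Definition max_frontiers (n : nat) (Ps : seq sperm) (I : interval) (F : {fset nat}) : Prop :=
  frontiers n Ps I F /\
  forall G, frontiers n Ps I G -> F `<=` G -> G = F.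

Definition is_container (n : nat) (Ps : seq sperm) (I J : interval) : Prop :=
  [/\ strong n Ps J, subint I J &
      forall J', strong n Ps J' -> subint I J' -> subint J J'].

Definition fset_in (F : {fset nat}) (I : interval) : {fset nat} :=
  [fset x in F | I.1 <= x <= I.2].

(* In a signed permutation, a conserved interval (a..c) with a < c occupies a
   block of consecutive positions read +a .. +c or -c .. -a.  When two such
   blocks overlap or touch, the element at the end of the first one forces
   both to have the same orientation, and then their union, intersection and
   both differences are again blocks of this kind.  Consequently the x for
   which (a..x) and (x..c) are both conserved form the unique maximal set of
   frontiers of (a..c).  A weak interval is enlarged by repeatedly absorbing
   an overlapping conserved interval, which keeps a and c frontiers; the
   process ends at a strong interval, and no strong interval containing
   (a..c) can avoid containing it, as it would overlap one of the two
   conserved intervals separating a and c from its ends. *)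

From mathcomp Require Import all_boot finmap zify.
From Stdlib Require Import Classical ClassicalEpsilon.

Set Implicit Arguments.
Unset Strict Implicit.
Unset Printing Implicit Defensive.

Definition value (P : sperm) (i : nat) : nat := (at_pos P i).2.

Lemma nth_map_snd (P : sperm) i : nth 0 (map snd P) i = value P i.
Proof.
rewrite /value /at_pos; have [iP | Pi] := ltnP i (size P).
  by rewrite (nth_map (false, 0)).
by rewrite !nth_default ?size_map.
Qed.

Lemma mem_take_dropP (P : sperm) p L v : p + L <= size P ->
  reflect (exists2 i, p <= i < p + L & value P i = v)
          (v \in map snd (take L (drop p P))).
Proof.
move=> hL; rewrite map_take map_drop.
have size_win : size (take L (drop p (map snd P))) = L.
  apply: size_takel; rewrite size_drop size_map.
  by set m := size P in hL *; lia.
apply: (iffP (nthP 0)) => [[i] | [i hi <-]].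
  rewrite size_win => hi <-; exists (p + i); first lia.
  by rewrite nth_take // nth_drop nth_map_snd.
exists (i - p); first by rewrite size_win; lia.
by rewrite nth_take ?nth_drop ?nth_map_snd ?subnKC //; lia.
Qed.

Definition signed_window (P : sperm) (s : bool) (a c p q : nat) : Prop :=
  [/\ p <= q < size P,
      forall i, i < size P -> (p <= i <= q) = (a <= value P i <= c),
      at_pos P p = (s, if s then a else c) &
      at_pos P q = (s, if s then c else a)].

Definition has_window (P : sperm) (a c : nat) : Prop :=
  exists s p q, signed_window P s a c p q.

Section Windows.
Variables (n : nat) (P : sperm).
Hypothesis sP : is_sperm n P.

Lemma value_eqE i j : i < size P -> j < size P -> (i == j) = (value P i == value P j).
Proof.
move=> hi hj; apply/eqP/eqP => [-> // | e].
have uP : uniq (map snd P) by rewrite (perm_uniq sP) iota_uniq.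
by apply/eqP; rewrite -(nth_uniq 0 _ _ uP) ?size_map // !nth_map_snd e.
Qed.

Lemma value_surj v : 1 <= v <= n -> exists2 i, i < size P & value P i = v.
Proof.
move=> hv; have : v \in map snd P by rewrite (perm_mem sP) mem_iota; lia.
by case/(nthP 0) => i; rewrite size_map nth_map_snd; exists i.
Qed.

Lemma window_length a c p q : 1 <= a -> c <= n -> p <= q < size P ->
  (forall i, i < size P -> (p <= i <= q) = (a <= value P i <= c)) -> q - p = c - a.
Proof.
move=> ha hc hpq win.
have ac : a <= c by have := win p; rewrite leqnn /=; lia.
have uniq_vals : uniq (map (value P) (iota p (q - p).+1)).
  rewrite map_inj_in_uniq ?iota_uniq // => i j; rewrite !mem_iota => hi hj.
  by move/eqP; rewrite -value_eqE; [move/eqP | lia | lia].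
have vals_eq : map (value P) (iota p (q - p).+1) =i iota a (c - a).+1.
  move=> v; rewrite mem_iota; apply/mapP/idP => [[i] | hv].
    by rewrite mem_iota => hi ->; have := win i ltac:(lia); lia.
  have [i hi ev] := value_surj (v:=v) ltac:(lia); subst v.
  by exists i => //; rewrite mem_iota; have := win i hi; lia.
have := perm_size (uniq_perm uniq_vals (iota_uniq _ _) vals_eq).
by rewrite size_map !size_iota; lia.
Qed.

Lemma conserved_inP a c : 1 <= a -> a <= c -> c <= n ->
  conserved_in P a c <-> has_window P a c.
Proof.
move=> ha ac cn; split.
  case=> p [hp [vals ends]].
  have win i : i < size P -> (p <= i <= p + (c - a)) = (a <= value P i <= c).
    move=> hi; have mem_i : (value P i \in iota a (c - a).+1) = (a <= value P i <= c).
      by rewrite mem_iota; apply/idP/idP; lia.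
    rewrite -mem_i -(perm_mem vals); apply/idP/mem_take_dropP; try lia.
      by move=> hpi; exists i => //; lia.
    by case=> j hj /eqP; rewrite -value_eqE //; [move/eqP=> <-; lia | lia].
  by case: ends => [[e1 e2] | [e1 e2]]; [exists true | exists false];
    exists p, (p + (c - a)); split => //; lia.
case=> s [p [q [hpq win e1 e2]]].
have len := window_length ha cn hpq win.
have vals : perm_eq (map snd (take (c - a).+1 (drop p P))) (iota a (c - a).+1).
  apply: uniq_perm; [|exact: iota_uniq|].
    by rewrite map_take map_drop take_uniq // drop_uniq // (perm_uniq sP) iota_uniq.
  move=> v; rewrite mem_iota; apply/mem_take_dropP/idP; try lia.
    by case=> i hi <-; have := win i; lia.
  move=> hv; have [i hi ev] := value_surj (v:=v) ltac:(lia); subst v.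
  by exists i => //; have := win i hi; lia.
exists p; split; first lia; split=> //.
by rewrite -len subnKC; [case: s e1 e2; [left | right] | lia].
Qed.

Section Overlap.
Variables (a1 c1 a2 c2 p1 q1 p2 q2 : nat).
Hypotheses (a12 : a1 < a2 <= c1) (c12 : c1 < c2).

Lemma positive_window_overlap :
  signed_window P true a1 c1 p1 q1 -> signed_window P true a2 c2 p2 q2 ->
  [/\ signed_window P true a1 c2 p1 q2, signed_window P true a2 c1 p2 q1,
      signed_window P true a1 a2 p1 p2 & signed_window P true c1 c2 q1 q2].
Proof.
move=> [hpq1 win1 e1 f1] [hpq2 win2 e2 f2] /=.
have ea2 : value P p2 = a2 by rewrite /value e2.
have ec1 : value P q1 = c1 by rewrite /value f1.
have := win1 p2 ltac:(lia); have := win2 q1 ltac:(lia); rewrite ea2 ec1 => o2 o1.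
have key i : i < size P -> [/\ (p1 <= i <= q1) = (a1 <= value P i <= c1),
    (p2 <= i <= q2) = (a2 <= value P i <= c2),
    (i == p2) = (value P i == a2) & (i == q1) = (value P i == c1)].
  move=> hi; split; [exact: win1 | exact: win2 | |].
    by rewrite -ea2 value_eqE //; lia.
  by rewrite -ec1 value_eqE //; lia.
have ord : [&& p1 <= p2, p2 <= q1 & q1 <= q2] by lia.
clear o1 o2 win1 win2.
by split; (split=> //; [lia | move=> i /key[]; lia]).
Qed.

(* Both windows would end at the same position, holding [+c1] and [-a2]. *)
Lemma mixed_window_overlap :
  signed_window P true a1 c1 p1 q1 -> signed_window P false a2 c2 p2 q2 -> False.
Proof.
move=> [hpq1 win1 e1 f1] [hpq2 win2 e2 f2] /=.
have ea2 : value P q2 = a2 by rewrite /value f2.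
have ec1 : value P q1 = c1 by rewrite /value f1.
have := win1 q2 ltac:(lia); have := win2 q1 ltac:(lia); rewrite ea2 ec1 => o2 o1.
have eq : q1 = q2 by lia.
by rewrite eq f2 in f1.
Qed.

End Overlap.
End Windows.

Definition mirror (P : sperm) : sperm := rev [seq (~~ e.1, e.2) | e <- P].

Lemma size_mirror P : size (mirror P) = size P.
Proof. by rewrite size_rev size_map. Qed.

Lemma mirrorK : involutive mirror.
Proof.
move=> P; rewrite /mirror map_rev revK -map_comp.
by rewrite (eq_map (g := id)) ?map_id // => -[b v] /=; rewrite negbK.
Qed.

Lemma at_pos_mirror P i : i < size P ->
  at_pos (mirror P) i = (~~ (at_pos P (size P - i.+1)).1, (at_pos P (size P - i.+1)).2).
Proof.
move=> hi; rewrite /at_pos /mirror nth_rev ?size_map //.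
by rewrite (nth_map (false, 0)) //; move: hi; set m := size P; lia.
Qed.

Lemma is_sperm_mirror n P : is_sperm n P -> is_sperm n (mirror P).
Proof. by rewrite /is_sperm /mirror map_rev -map_comp perm_rev. Qed.

Lemma signed_window_mirror P s a c p q : signed_window P s a c p q ->
  signed_window (mirror P) (~~ s) a c (size P - q.+1) (size P - p.+1).
Proof.
case=> hpq win e f; rewrite /signed_window size_mirror.
have value_mirror i : i < size P -> value (mirror P) i = value P (size P - i.+1).
  by move=> hi; rewrite /value at_pos_mirror.
split; first lia.
- by move=> i hi; rewrite value_mirror // -win; lia.
- rewrite at_pos_mirror; last lia.
  have -> : size P - (size P - q.+1).+1 = q by lia.
  by rewrite f; case: (s).
- rewrite at_pos_mirror; last lia.
  have -> : size P - (size P - p.+1).+1 = p by lia.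
  by rewrite e; case: (s).
Qed.

Lemma has_window_mirror P a c : has_window (mirror P) a c -> has_window P a c.
Proof.
case=> s [p [q /signed_window_mirror]]; rewrite mirrorK size_mirror => w.
by exists (~~ s), (size P - q.+1), (size P - p.+1).
Qed.

Lemma window_overlap n P s1 s2 a1 c1 a2 c2 p1 q1 p2 q2 :
  is_sperm n P -> a1 < a2 <= c1 -> c1 < c2 ->
  signed_window P s1 a1 c1 p1 q1 -> signed_window P s2 a2 c2 p2 q2 ->
  [/\ has_window P a1 c2, has_window P a2 c1, has_window P a1 a2 & has_window P c1 c2].
Proof.
move=> + a12 c12.
(* Reading [P] backwards with all signs flipped exchanges the orientations. *)
wlog -> : P s1 s2 p1 q1 p2 q2 / s1 = true => [mirror_case sP | sP].
  case: s1 => [|w1 w2]; first exact: mirror_case.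
  have [] := mirror_case _ true (~~ s2) _ _ _ _ erefl (is_sperm_mirror sP)
    (signed_window_mirror w1) (signed_window_mirror w2).
  by move=> *; split; apply: has_window_mirror.
case: s2 => w1 w2; last by case: (mixed_window_overlap a12 c12 w1 w2).
have [*] := positive_window_overlap sP a12 c12 w1 w2.
by split; do 3 eexists; eassumption.
Qed.

Section Family.
Variables (n : nat) (Ps : seq sperm).
Hypothesis V : valid_family n Ps.

Lemma is_sperm_family P : P \in Ps -> is_sperm n P.
Proof. by case: V => _ _ _ hPs /hPs[]. Qed.

Lemma conserved_single x : 1 <= x <= n -> conserved n Ps (x, x).
Proof. by move=> hx; split=> //=; [lia | lia | left]. Qed.

Lemma conserved_window a c P :
  conserved n Ps (a, c) -> a < c -> P \in Ps -> has_window P a c.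
Proof.
case=> /= ha ac cn [e | [_ hc]] lt hP; first lia.
exact/(conserved_inP (is_sperm_family hP) ha ac cn)/hc.
Qed.

Lemma conserved_of_windows a c : 1 <= a -> a <= c -> c <= n ->
  (forall P, P \in Ps -> has_window P a c) -> conserved n Ps (a, c).
Proof.
move=> ha ac cn hw; split=> //=.
have [-> | ne] := eqVneq a c; [by left | right; split; first lia].
by move=> P hP; apply/(conserved_inP (is_sperm_family hP) ha ac cn)/hw.
Qed.

Lemma conserved_overlap a1 c1 a2 c2 :
  conserved n Ps (a1, c1) -> conserved n Ps (a2, c2) -> a1 < a2 <= c1 -> c1 < c2 ->
  [/\ conserved n Ps (a1, c2), conserved n Ps (a2, c1),
      conserved n Ps (a1, a2) & conserved n Ps (c1, c2)].
Proof.
move=> h1 h2 a12 c12; have [/= ha1 _ _ _] := h1; have [/= _ _ hc2 _] := h2.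
have windows P : P \in Ps -> [/\ has_window P a1 c2, has_window P a2 c1,
                                  has_window P a1 a2 & has_window P c1 c2].
  move=> hP; have [s1 [p1 [q1 w1]]] := conserved_window h1 ltac:(lia) hP.
  have [s2 [p2 [q2 w2]]] := conserved_window h2 ltac:(lia) hP.
  exact: window_overlap (is_sperm_family hP) a12 c12 w1 w2.
by split; apply: conserved_of_windows; try lia; move=> P /windows[].
Qed.

Lemma conserved_chain a b c :
  conserved n Ps (a, b) -> conserved n Ps (b, c) -> conserved n Ps (a, c).
Proof.
move=> h1 h2; have [/= _ ab _ _] := h1; have [/= _ bc _ _] := h2.
have [-> // | ne1] := eqVneq a b; have [<- // | ne2] := eqVneq b c.
by have [] := conserved_overlap h1 h2 ltac:(lia) ltac:(lia).
Qed.

Lemma conserved_inner a x y c : conserved n Ps (a, y) -> conserved n Ps (x, c) ->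
  a <= x <= y -> y <= c -> conserved n Ps (x, y).
Proof.
move=> h1 h2 axy yc.
have [<- // | ne1] := eqVneq a x; have [-> // | ne2] := eqVneq y c.
by have [] := conserved_overlap h1 h2 ltac:(lia) ltac:(lia).
Qed.

Lemma strong_conserved J : strong n Ps J -> conserved n Ps J.
Proof. by case. Qed.

Definition is_frontier (J : interval) (x : nat) : Prop :=
  [/\ J.1 <= x <= J.2, conserved n Ps (J.1, x) & conserved n Ps (x, J.2)].

Local Open Scope fset_scope.

Definition frontier_set (J : interval) : {fset nat} :=
  [fset x in iota J.1 (J.2.+1 - J.1) |
     if excluded_middle_informative (is_frontier J x) then true else false].

Lemma in_fset_in (F : {fset nat}) (I : interval) x :
  (x \in fset_in F I) = (x \in F) && (I.1 <= x <= I.2).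
Proof. by rewrite inE. Qed.

Lemma in_frontier_set J x : x \in frontier_set J <-> is_frontier J x.
Proof.
rewrite !inE mem_iota; case: excluded_middle_informative => [fx | nfx].
  by rewrite andbT; split=> // _; case: fx; lia.
by rewrite andbF.
Qed.

Lemma frontier_conserved J x : is_frontier J x -> conserved n Ps J.
Proof. by case: J => j1 j2 [_ jx xj]; apply: conserved_chain jx xj. Qed.

Lemma frontier_set_frontiers J : conserved n Ps J -> frontiers n Ps J (frontier_set J).
Proof.
case: J => j1 j2 cJ; have [/= j1n j12 j2n _] := cJ.
split=> /= [||f /in_frontier_set[] //|f g /in_frontier_set[/= hf _ fj]].
- by apply/in_frontier_set; split=> //=; [lia | apply: conserved_single; lia].
- by apply/in_frontier_set; split=> //=; [lia | apply: conserved_single; lia].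
by move=> /in_frontier_set[/= hg jg _] fg; apply: (conserved_inner jg fj); lia.
Qed.

Lemma frontiers_sub_frontier_set J F :
  conserved n Ps J -> frontiers n Ps J F -> F `<=` frontier_set J.
Proof.
case: J => j1 j2 cJ [/= hj1 hj2 bounds conservedF]; have [/= j1n _ j2n _] := cJ.
apply/fsubsetP => x hx; apply/in_frontier_set; have hxb := bounds x hx; split=> //=.
  have [<- | ne] := eqVneq j1 x; [apply: conserved_single | apply: conservedF => //]; lia.
have [-> | ne] := eqVneq x j2; [apply: conserved_single | apply: conservedF => //]; lia.
Qed.

Lemma frontier_set_max J :
  conserved n Ps J -> max_frontiers n Ps J (frontier_set J).
Proof.
move=> cJ; split=> [|G hG sub]; first exact: frontier_set_frontiers.
by apply/eqP; rewrite eqEfsubset sub frontiers_sub_frontier_set.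
Qed.

Lemma max_frontiers_eq J F :
  conserved n Ps J -> max_frontiers n Ps J F -> F = frontier_set J.
Proof.
move=> cJ [hF maxF].
by apply/esym/maxF; [apply: frontier_set_frontiers | apply: frontiers_sub_frontier_set].
Qed.

Lemma in_max_frontiers J F x : conserved n Ps J -> max_frontiers n Ps J F ->
  x \in F <-> is_frontier J x.
Proof. by move=> cJ /(max_frontiers_eq cJ) ->; apply: in_frontier_set. Qed.

Lemma frontier_set_inner J a c : is_frontier J a -> is_frontier J c -> a <= c ->
  frontier_set (a, c) = fset_in (frontier_set J) (a, c).
Proof.
move=> [ha ja aj] [hc jc cj] ac; apply/fsetP => x; rewrite in_fset_in /=.
apply/idP/idP => [/in_frontier_set[/= hx ax xc] | /andP[/in_frontier_set[hx jx xj] hx']].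
  rewrite hx andbT; apply/in_frontier_set; split; first lia.
    exact: conserved_chain ja ax.
  exact: conserved_chain xc cj.
apply/in_frontier_set; split=> //=.
  by apply: (conserved_inner jx aj); lia.
by apply: (conserved_inner jc xj); lia.
Qed.

Lemma frontier_container J a c : a < c -> strong n Ps J ->
  is_frontier J a -> is_frontier J c -> is_container n Ps (a, c) J.
Proof.
move=> ac sJ [ha ja _] [hc _ cj]; split=> //; first by split=> /=; lia.
move=> J' [_ _ nov] [/= s1 s2]; split.
  by case: (leqP J'.1 J.1) => // lt; case: (nov _ ja); right=> /=; lia.
by case: (leqP J.2 J'.2) => // lt; case: (nov _ cj); left=> /=; lia.
Qed.

Lemma frontier_extend_right J x d :
  is_frontier J x -> conserved n Ps (J.2, d) -> is_frontier (J.1, d) x.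
Proof.
by move=> [hx jx xj] hd; have [/= _ ? _ _] := hd; split=> //=;
  [lia | apply: conserved_chain xj hd].
Qed.

Lemma frontier_extend_left J x d :
  is_frontier J x -> conserved n Ps (d, J.1) -> is_frontier (d, J.2) x.
Proof.
by move=> [hx jx xj] hd; have [/= _ ? _ _] := hd; split=> //=;
  [lia | apply: conserved_chain hd jx].
Qed.

Lemma max_frontiers_container J F a c : a < c -> strong n Ps J ->
  max_frontiers n Ps J F -> a \in F -> c \in F ->
  (forall FI, max_frontiers n Ps (a, c) FI -> FI = fset_in F (a, c)) /\
  is_container n Ps (a, c) J.
Proof.
move=> ac sJ maxF; have cJ := strong_conserved sJ.
move=> /(in_max_frontiers _ cJ maxF) fa /(in_max_frontiers _ cJ maxF) fc.
split; last exact: frontier_container.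
have cI : conserved n Ps (a, c).
  by case: fa fc => ? _ aj [? jc _]; apply: (conserved_inner jc aj); lia.
move=> FI /(max_frontiers_eq cI) ->.
by rewrite (max_frontiers_eq cJ maxF) (frontier_set_inner fa fc) // ltnW.
Qed.

Lemma exists_strong_hull a c : conserved n Ps (a, c) -> a < c ->
  exists2 J, strong n Ps J & is_frontier J a /\ is_frontier J c.
Proof.
move=> hI ac; have [/= a1 _ cn _] := hI.
suff hull J : is_frontier J a -> is_frontier J c ->
    exists2 J', strong n Ps J' & is_frontier J' a /\ is_frontier J' c.
  by apply: (hull (a, c)); split=> //=; try lia; apply: conserved_single; lia.
have [m hm] := ubnP (n - (J.2 - J.1)).
elim: m J hm => [// | m IH] [j1 j2] /= hm ha hc.
have cJ := frontier_conserved ha; have [/= j1n _ j2n _] := cJ.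
have [sJ | nsJ] := classic (strong n Ps (j1, j2)); first by exists (j1, j2).
have [[k1 k2] cK ov] : exists2 K, conserved n Ps K & overlap (j1, j2) K.
  apply: NNPP => none; apply: nsJ; split=> // [|K cK ov]; last by apply: none; exists K.
  by case: ha; case: hc => /=; lia.
have [/= k1n _ k2n _] := cK.
case: ov => /= [[o12 o3] | [o12 o3]].
  have [_ _ _ jk] := conserved_overlap cJ cK o12 o3.
  apply: (IH (j1, k2)); first by rewrite /=; lia.
    exact: frontier_extend_right ha jk.
  exact: frontier_extend_right hc jk.
have [_ _ kj _] := conserved_overlap cK cJ o12 o3.
apply: (IH (k1, j2)); first by rewrite /=; lia.
  exact: frontier_extend_left ha kj.
exact: frontier_extend_left hc kj.
Qed.

End Family.

Lemma container_unique n Ps I J J' :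
  is_container n Ps I J -> is_container n Ps I J' -> J = J'.
Proof.
case: J J' => [j1 j2] [k1 k2] [sJ sub minJ] [sJ' sub' minJ'].
have [/= ? ?] := minJ _ sJ' sub'; have [/= ? ?] := minJ' _ sJ sub.
by congr pair; lia.
Qed.

Local Open Scope fset_scope.

Theorem theorem5 (n : nat) (Ps : seq sperm) :
  valid_family n Ps ->
  (forall I, conserved n Ps I -> exists! F, max_frontiers n Ps I F) /\
  (forall I, conserved n Ps I -> I.1 < I.2 ->
     strong n Ps I \/
     (weak n Ps I /\
      (exists! J, strong n Ps J /\
         exists FJ fi fj, [/\ max_frontiers n Ps J FJ, fi \in FJ, fj \in FJ,
                              fi < fj & I = (fi, fj)]) /\
      (forall J FJ, strong n Ps J -> max_frontiers n Ps J FJ ->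
         (exists fi fj, [/\ fi \in FJ, fj \in FJ, fi < fj & I = (fi, fj)]) ->
         (forall FI, max_frontiers n Ps I FI -> FI = fset_in FJ I) /\
         is_container n Ps I J))).
Proof.
move=> V; split=> [I cI | [a c] /= cI ac].
  exists (frontier_set n Ps I); split; first exact: frontier_set_max.
  by move=> F /(max_frontiers_eq V cI).
have [sI | wI] := classic (strong n Ps (a, c)); [by left | right; split=> //].
have [J sJ [fa fc]] := exists_strong_hull V cI ac.
have maxJ := frontier_set_max V (strong_conserved sJ).
have [fJa fJc] : a \in frontier_set n Ps J /\ c \in frontier_set n Ps J.
  by split; apply/in_frontier_set.
have [_ contJ] := max_frontiers_container V ac sJ maxJ fJa fJc.
split=> [|J' FJ sJ' maxFJ [fi [fj [hi hj _ [? ?]]]]]; subst; last first.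
  exact: max_frontiers_container.
exists J; split=> [|J' [sJ' [FJ [fi [fj [maxFJ hi hj _ [? ?]]]]]]]; subst.
  by split=> //; exists (frontier_set n Ps J), a, c.
have [_ contJ'] := max_frontiers_container V ac sJ' maxFJ hi hj.
exact: container_unique contJ contJ'.
Qed.
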